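(* Let $n\ge 2$ and let $(G(k))_{k\in\mathbb{N}}$ be a sequence of digraphs on $\mathcal{V}=\{1,\dots,n\}$ with knowledge sets evolving by the flooding update described in the context. Fix a node $w\in\mathcal{V}$. Suppose that for every $k\in\{0,1,\dots,n-2\}$ there exists an output-cord $\mathcal{O}^w(k)$ from node $w$ at time $k$ with $|\mathcal{O}^w(k)|\ge k+1$. Then for every $k\in\{0,1,\dots,n-2\}$, $|\{i\in\mathcal{V} : d_w\in\mathcal{K}_i(k+1)\}|\ge k+2$.
   Context: Network: $\mathcal{V}=\{1,\dots,n\}$; node $i$ holds initial data $d_i\in\mathbb{R}$, pairwise distinct. At discrete times $k\in\mathbb{N}$ communication follows digraph $G(k)=(\mathcal{V},\mathcal{E}(k))$; node $i$ sends to $j$ at time $k$ iff $(i,j)\in\mathcal{E}(k)$. Knowledge sets: $\mathcal{K}_i(0)=\{d_i\}$ and $\mathcal{K}_j(k+1)=\mathcal{K}_j(k)\cup\bigcup_{i:(i,j)\in\mathcal{E}(k)}\mathcal{K}_i(k)$. Output-cord: an output-cord from node $i$ at time $k$ is an ordered list $\mathcal{O}^i(k)=(\mathcal{O}^i_1,\dots,\mathcal{O}^i_m)$ of pairwise distinct nodes of $\mathcal{V}\setminus\{i\}$ such that $(\mathcal{O}^i_{j+1},\mathcal{O}^i_j)\in\mathcal{E}(k)$ for all $j\in\{1,\dots,m-1\}$ and $(i,\mathcal{O}^i_m)\in\mathcal{E}(k)$; its cardinality is $|\mathcal{O}^i(k)|=m$. *)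

From mathcomp Require Import all_boot all_order all_algebra.
From mathcomp Require Import reals.
Set Implicit Arguments. Unset Strict Implicit. Unset Printing Implicit Defensive.

(* Nodes are 'I_n (node i+1 of the paper is the ordinal i).
   The time-varying digraph is E : nat -> rel 'I_n, with
   (i, j) in E(k)  <->  E k i j  (node i sends to node j at time k). *)

Fixpoint know {R : eqType} {n : nat} (E : nat -> rel 'I_n) (d : 'I_n -> R)
  (k : nat) (j : 'I_n) : pred R :=
  match k with
  | 0 => fun x => x == d j
  | k'.+1 => fun x => know E d k' j x || [exists i, E k' i j && know E d k' i x]
  end.

(* s = [:: O_1; ...; O_m] is an output-cord from w at time k:
   pairwise distinct nodes of V \ {w}, (O_{j+1}, O_j) in E(k) for j < m,
   and (w, O_m) in E(k).  The edge conditions are exactly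
   path (E k) w [:: O_m; ...; O_1]. *)
Definition is_output_cord {n : nat} (E : nat -> rel 'I_n) (k : nat) (w : 'I_n)
  (s : seq 'I_n) : bool :=
  [&& uniq s, w \notin s & path (E k) w (rev s)].

From mathcomp Require Import all_boot all_order all_algebra.
From mathcomp Require Import reals.
From mathcomp Require Import zify.

Set Implicit Arguments.
Unset Strict Implicit.
Unset Printing Implicit Defensive.

(* Let S(k) be the set of nodes knowing d_w at time k; it contains w, grows
   with k, and every edge of G(k) leaving S(k) lands in S(k+1).  The cord at
   time k is a path of G(k) from w through k+1 further nodes: either all of
   them already lie in S(k), so |S(k)| >= k+2, or the path crosses out of
   S(k) and S(k+1) gains a node.  By induction |S(k)| >= k+1 for k <= n-1. *)

Lemma path_crosses_boundary (T : eqType) (e : rel T) (P : pred T) (x : T)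
    (p : seq T) :
  path e x p -> P x -> ~~ all P p -> exists x' y, [&& e x' y, P x' & ~~ P y].
Proof.
elim: p x => [|a p IH] x //= /andP[exa pa] Px.
case Pa: (P a) => /=; first exact: IH pa Pa.
by move=> _; exists x, a; rewrite exa Px Pa.
Qed.

Section Flooding.

Variables (T : eqType) (n : nat) (E : nat -> rel 'I_n) (d : 'I_n -> T) (w : 'I_n).

Definition informed k := [set i : 'I_n | know E d k i (d w)].

Lemma informed_subS k : informed k \subset informed k.+1.
Proof. by apply/subsetP => i; rewrite !inE /= => ->. Qed.

Lemma informed_edge k x y : E k x y -> x \in informed k -> y \in informed k.+1.
Proof.
rewrite !inE /= => exy xS; apply/orP; right.
by apply/existsP; exists x; rewrite exy.
Qed.

Lemma source_informed k : w \in informed k.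
Proof.
elim: k => [|k IH]; first by rewrite inE /=.
exact: subsetP (informed_subS k) _ IH.
Qed.

Lemma card_informedS k s : is_output_cord E k w s ->
  (minn (size s).+1 #|informed k|.+1 <= #|informed k.+1|)%N.
Proof.
case/and3P=> us wns ps.
have [allS | notallS] := boolP (all (mem (informed k)) (rev s)).
  have : (size (w :: s) <= #|informed k|)%N.
    rewrite cardE; apply: uniq_leq_size; first by rewrite /= wns us.
    move=> x; rewrite inE mem_enum => /orP[/eqP-> | xs].
      exact: source_informed.
    by move/allP: allS; apply; rewrite mem_rev.
  move/leq_trans/(_ (subset_leq_card (informed_subS k))).
  by apply: leq_trans; rewrite geq_minl.
have [x [y /and3P[exy xS yS]]] :=
  path_crosses_boundary ps (source_informed k) notallS.
have : y |: informed k \subset informed k.+1.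
  by rewrite subUset sub1set (informed_edge exy xS) informed_subS.
move/subset_leq_card; rewrite cardsU1 yS add1n.
by apply: leq_trans; rewrite geq_minr.
Qed.

Lemma card_informed_ge :
  (forall k, (k <= n - 2)%N ->
     exists s, is_output_cord E k w s /\ (k + 1 <= size s)%N) ->
  forall k, (k <= n - 1)%N -> (k + 1 <= #|informed k|)%N.
Proof.
move=> cords; elim=> [|k IH] hk.
  by rewrite card_gt0; apply/set0Pn; exists w; exact: source_informed.
have [s [cord sz]] := cords k (ltac:(lia)).
have IHk := IH (ltnW hk).
apply: leq_trans (card_informedS cord).
by rewrite leq_min; apply/andP; split; lia.
Qed.

End Flooding.

Theorem lemma2 (R : realType) (n : nat) (E : nat -> rel 'I_n) (d : 'I_n -> R)
  (w : 'I_n) :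
  (2 <= n)%N ->
  injective d ->
  (forall k : nat, (k <= n - 2)%N ->
     exists s : seq 'I_n, is_output_cord E k w s /\ (k + 1 <= size s)%N) ->
  forall k : nat, (k <= n - 2)%N ->
    (k + 2 <= #|[set i : 'I_n | know E d k.+1 i (d w)]|)%N.
Proof.
(* Only the value d w is tracked, so the data need not be pairwise distinct. *)
move=> n2 _ cords k hk.
have := card_informed_ge d cords (k := k.+1) (ltac:(lia)).
by rewrite addn1 addn2.
Qed.
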